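(* Let $q\ge5$ be a prime power with $q\equiv\xi\pmod 3$, $\xi\in\{-1,0,1\}$, and let $\mathcal{C}_\mathscr{C}$ be the $[q+1,q-3,5]_q$ code with parity check matrix whose columns are the vectors $(1,t,t^2,t^3)$, $t\in\mathbb{F}_q$, and $(0,0,0,1)$. Let $w\in\{3,\ldots,\lfloor (q+3)/2\rfloor\}$. (i) If $(W,\xi)\in\{(2,1),(3,1),(3,0)\}$ and $\mathcal{V}^{(W)}_a,\mathcal{V}^{(W)}_b$ are weight-$W$ cosets of $\mathcal{C}_\mathscr{C}$ representing the two distinct weight distributions of weight-$W$ cosets, then $$B_{q+4-w}(\mathcal{V}^{(W)}_a)-(-1)^qB_w(\mathcal{V}^{(W)}_a)=B_{q+4-w}(\mathcal{V}^{(W)}_b)-(-1)^qB_w(\mathcal{V}^{(W)}_b).$$ (ii) If $\xi=-1$ and $\mathcal{V}^{(3)}_a,\mathcal{V}^{(3)}_b,\mathcal{V}^{(3)}_c$ are weight-$3$ cosets of $\mathcal{C}_\mathscr{C}$ representing the three distinct weight distributions of weight-$3$ cosets, then $$B_{q+4-w}(\mathcal{V}^{(3)}_a)-(-1)^qB_w(\mathcal{V}^{(3)}_a)=B_{q+4-w}(\mathcal{V}^{(3)}_b)-(-1)^qB_w(\mathcal{V}^{(3)}_b)=B_{q+4-w}(\mathcal{V}^{(3)}_c)-(-1)^qB_w(\mathcal{V}^{(3)}_c).$$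
   Context: A coset of a linear code $\mathcal{C}\subseteq\mathbb{F}_q^n$ is a set $\mathbf{v}+\mathcal{C}$; its weight is the minimum Hamming weight of its vectors. $B_w(\mathcal{V})$ is the number of vectors of Hamming weight $w$ in the coset $\mathcal{V}$. For $(W,\xi)\in\{(2,1),(3,1),(3,0)\}$ the weight-$W$ cosets of $\mathcal{C}_\mathscr{C}$ have exactly two distinct weight distributions, and for $\xi=-1$ the weight-$3$ cosets have exactly three distinct weight distributions. *)

From HB Require Import structures.
From mathcomp Require Import all_boot all_order all_algebra all_field.
Set Implicit Arguments. Unset Strict Implicit. Unset Printing Implicit Defensive.
Import Order.TTheory GRing.Theory Num.Theory.
Local Open Scope ring_scope.

(* Coordinates of the length-(q+1) code are indexed by [option F]:
   [Some t] is the column (1,t,t^2,t^3), [None] is the column (0,0,0,1). *)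
Definition vec (F : finFieldType) := {ffun option F -> F}.

Definition pc_row (F : finFieldType) (j : nat) (v : vec F) : F :=
  \sum_(t : F) v (Some t) * t ^+ j + (j == 3%N)%:R * v None.

Definition code (F : finFieldType) : {set vec F} :=
  [set v : vec F | [forall j : 'I_4, pc_row j v == 0]].

Definition coset (F : finFieldType) (v : vec F) : {set vec F} :=
  [set u : vec F | u - v \in code F].

Definition wt (F : finFieldType) (u : vec F) : nat := #|[set i | u i != 0]|.

Definition coset_has_weight (F : finFieldType) (V : {set vec F}) (W : nat) : Prop :=
  (exists2 u, u \in V & wt u = W) /\ (forall u, u \in V -> (W <= wt u)%N).

Definition B (F : finFieldType) (w : nat) (V : {set vec F}) : nat :=
  #|[set u in V | wt u == w]|.

Definition Dq (F : finFieldType) (w : nat) (V : {set vec F}) : int :=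
  (B (#|F| + 4 - w) V)%:Z - (-1) ^+ #|F| * (B w V)%:Z.

From HB Require Import structures.
From mathcomp Require Import all_boot all_order all_algebra all_field.
From mathcomp Require Import zify ring.
Import Order.TTheory GRing.Theory Num.Theory.
Set Implicit Arguments. Unset Strict Implicit. Unset Printing Implicit Defensive.
Local Open Scope ring_scope.

(* The code has minimum distance at least 5: if a codeword u of weight at most
   4 had u_t0 <> 0, combining the four parity checks with the coefficients of
   the polynomial of degree at most 3 vanishing on the rest of the finite
   support of u would give u_t0 p(t0) = 0.  Hence the syndrome map is a
   bijection from the vectors supported on any four coordinates onto F^4, and
   every coset contains exactly as many vectors supported in a given set T of
   at least four coordinates as the code does.  Counting the pairs (u, T) with
   supp u <= T and #|T| = t shows that sum_k B_k C(n - k, n - t), n = q + 1,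
   does not depend on the coset for 4 <= t <= n.  Two cosets of weight 2 (or
   of weight 3) have the same B_k for k < 3, so the differences
   e_k of their weight distributions solve a triangular binomial system,
   whence e_k = (-1)^(k-3) C(q - 2, k - 3) e_3; the symmetry of the binomial
   coefficient then gives e_(q+4-w) = (-1)^q e_w. *)

Lemma mul_bin_sub M m a : (a <= m <= M)%N ->
  ('C(M, m) * 'C(m, a) = 'C(M, a) * 'C(M - a, m - a))%N.
Proof.
move=> /andP [am mM].
have fM := bin_fact mM; have fm := bin_fact am.
have fMa := @bin_fact M a (leq_trans am mM).
have fMam := @bin_fact (M - a) (m - a) (leq_sub2r a mM).
rewrite (_ : (M - a - (m - a) = M - m)%N) in fMam; last by lia.
apply/eqP; rewrite -(eqn_pmul2r (fact_gt0 a)) -(eqn_pmul2r (fact_gt0 (m - a))).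
rewrite -(eqn_pmul2r (fact_gt0 (M - m))); apply/eqP.
transitivity M`!; first by rewrite -fM -fm; ring.
by rewrite -fMa -fMam; ring.
Qed.

Section BinomialSystem.
Variable R : comPzRingType.

Lemma sum_sign_bin m n : (0 < m <= n)%N ->
  \sum_(a < n.+1) (-1) ^+ a * 'C(m, a)%:R = 0 :> R.
Proof.
move=> /andP [m_gt0 mn].
transitivity (\sum_(a < m.+1) (-1) ^+ a * 'C(m, a)%:R : R).
  rewrite [RHS](big_ord_widen n.+1 (fun a => (-1) ^+ a * 'C(m, a)%:R)) ?ltnS //.
  rewrite [RHS]big_mkcond; apply: eq_bigr => a _.
  by case: ltnP => // ma; rewrite bin_small ?mulr0.
transitivity ((-1 + 1 : R) ^+ m).
  by rewrite exprD1n; apply: eq_bigr => a _; rewrite mulr_natr.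
by rewrite addNr expr0n eqn0Ngt m_gt0.
Qed.

Lemma sum_sign_bin_bin M m : (0 < m <= M)%N ->
  \sum_(a < M.+1) (-1) ^+ a * 'C(M, a)%:R * 'C(M - a, M - m)%:R = 0 :> R.
Proof.
move=> /andP [m_gt0 mM].
rewrite (eq_bigr (fun a : 'I_M.+1 => 'C(M, m)%:R * ((-1) ^+ a * 'C(m, a)%:R))).
  by rewrite -big_distrr /= sum_sign_bin ?m_gt0 // mulr0.
move=> a _; case: (leqP a m) => [am | ma]; last first.
  have Mma : (M - a < M - m)%N by have := ltn_ord a; lia.
  by rewrite (bin_small ma) (bin_small Mma) !mulr0.
rewrite (_ : (M - m = (M - a) - (m - a))%N); last by lia.
rewrite bin_sub; last by lia.
rewrite -mulrA -natrM -mul_bin_sub ?am // natrM; ring.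
Qed.

Lemma bin_system_eq0 N d (g : nat -> R) :
  (forall k, (k <= d)%N -> g k = 0) ->
  (forall t, (d < t <= N)%N -> \sum_(k < N.+1) g k * 'C(N - k, N - t)%:R = 0) ->
  forall k, (k <= N)%N -> g k = 0.
Proof.
move=> g_le_d g_sys; elim/ltn_ind => t IH tN.
have [td | dt] := leqP t d; first exact: g_le_d.
have := g_sys t; rewrite dt tN => /(_ isT).
rewrite (bigD1 (Ordinal (tN : t < N.+1)%N)) //= binn mulr1 big1 ?addr0 // => -[k kN] /= kt.
have k_neq_t : k != t by apply: contra kt => /eqP k_t; apply/eqP/val_inj.
case: (ltngtP k t) k_neq_t => // [k_lt_t | t_lt_k] _.
  by rewrite IH ?mul0r //; lia.
by rewrite bin_small ?mulr0 //; lia.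
Qed.

Lemma bin_system_solve N d (e : nat -> R) :
  (forall k, (k < d)%N -> e k = 0) ->
  (forall t, (d < t <= N)%N -> \sum_(k < N.+1) e k * 'C(N - k, N - t)%:R = 0) ->
  forall k, (d <= k <= N)%N -> e k = (-1) ^+ (k - d) * 'C(N - d, k - d)%:R * e d.
Proof.
move=> e_lt_d e_sys.
pose f k : R := if (k < d)%N then 0 else (-1) ^+ (k - d) * 'C(N - d, k - d)%:R * e d.
have f_sys t : (d < t <= N)%N -> \sum_(k < N.+1) f k * 'C(N - k, N - t)%:R = 0.
  move=> /andP [dt tN].
  rewrite -(big_mkord xpredT (fun k => f k * 'C(N - k, N - t)%:R)).
  rewrite (big_cat_nat (n := d)) //=; last by lia.
  rewrite big_nat big1 ?add0r => [|k /andP [_ kd]]; last by rewrite /f kd mul0r.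
  rewrite (big_addn 0 _ d) (_ : N.+1 - d = (N - d).+1)%N; last by lia.
  rewrite big_mkord.
  transitivity (e d * \sum_(a < (N - d).+1)
      (-1) ^+ a * 'C(N - d, a)%:R * 'C(N - d - a, N - d - (t - d))%:R).
    rewrite big_distrr; apply: eq_bigr => a _ /=.
    rewrite /f ltnNge leq_addl /= addnK.
    rewrite (_ : N - (a + d) = N - d - a)%N; last by lia.
    rewrite (_ : N - t = N - d - (t - d))%N; last by lia.
    ring.
  by rewrite sum_sign_bin_bin ?mulr0 //; lia.
move=> k /andP [dk kN]; apply/eqP; rewrite -subr_eq0.
have -> : (-1) ^+ (k - d) * 'C(N - d, k - d)%:R * e d = f k by rewrite /f ltnNge dk.
apply/eqP; apply: (@bin_system_eq0 N d (fun k => e k - f k)) => // [j jd | t dt].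
  rewrite /f; case: ltnP => [j_lt_d | dj]; first by rewrite e_lt_d // subr0.
  have -> : j = d by lia.
  by rewrite subnn expr0 bin0 !mul1r subrr.
under eq_bigr do rewrite mulrBl.
by rewrite sumrB e_sys // f_sys // subr0.
Qed.

Lemma bin_solution_reflect N d (e : nat -> R) :
  (forall k, (d <= k <= N)%N -> e k = (-1) ^+ (k - d) * 'C(N - d, k - d)%:R * e d) ->
  forall k, (d <= k <= N)%N -> e (N + d - k)%N = (-1) ^+ (N + d) * e k.
Proof.
move=> e_sol k /andP [dk kN].
rewrite [e (N + d - k)%N]e_sol; last by lia.
rewrite [e k]e_sol; last by lia.
rewrite (_ : N + d - k - d = N - d - (k - d))%N; last by lia.
rewrite bin_sub; last by lia.
have -> : (-1) ^+ (N - d - (k - d)) = (-1) ^+ (N + d) * (-1) ^+ (k - d) :> R.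
  rewrite -exprD (_ : N + d + (k - d) = N - d - (k - d) + 2 * k)%N; last by lia.
  by rewrite exprD exprM sqrrN !expr1n mulr1.
ring.
Qed.

End BinomialSystem.

Lemma card_supsets (I : finType) (S : {set I}) t : (t <= #|I|)%N ->
  #|[set T : {set I} | S \subset T & #|T| == t]| = 'C(#|I| - #|S|, #|I| - t).
Proof.
move=> tI; rewrite (_ : #|I| - #|S| = #|~: S|)%N; last by have := cardsC S; lia.
rewrite -cards_draws -(card_preimset _ (@setC_inj I)).
apply: eq_card => T; rewrite !inE subsetC; congr (_ && _).
by apply/eqP/eqP; have := cardsC T; lia.
Qed.

Section ParityCheckCode.
Variable F : finFieldType.
Implicit Types (u v x va vb : vec F) (T : {set option F}).

Definition supp u : {set option F} := [set i | u i != 0].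

Definition syndrome u : {ffun 'I_4 -> F} := [ffun j : 'I_4 => pc_row j u].

Definition supported T : {set vec F} := [set u | supp u \subset T].

Lemma syndromeB u v : syndrome (u - v) = syndrome u - syndrome v.
Proof.
apply/ffunP => j; rewrite !ffunE /pc_row.
under eq_bigr do rewrite !ffunE mulrBl.
by rewrite sumrB !ffunE; ring.
Qed.

Lemma mem_code u : (u \in code F) = (syndrome u == 0).
Proof.
rewrite inE; apply/forallP/eqP => [u0 | /ffunP u0 j].
  by apply/ffunP => j; rewrite !ffunE; apply/eqP.
by have := u0 j; rewrite !ffunE => ->.
Qed.

Lemma mem_coset u v : (u \in coset v) = (syndrome u == syndrome v).
Proof. by rewrite inE mem_code syndromeB subr_eq0. Qed.

Lemma wt_Some_None u : wt u = (#|[set t | u (Some t) != 0%R]| + (u None != 0%R))%N.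
Proof.
rewrite /wt (cardsD1 None) inE addnC; congr (_ + _)%N.
rewrite -[RHS](card_imset _ Some_inj); apply: eq_card => -[t|]; rewrite !inE /=.
  by rewrite (mem_imset _ _ Some_inj) inE.
by apply/esym/imsetP => -[].
Qed.

Lemma pc_row_poly (p : {poly F}) u : (size p <= 4)%N ->
  \sum_(j < 4) p`_j * pc_row j u = \sum_t u (Some t) * p.[t] + p`_3 * u None.
Proof.
move=> size_p; rewrite /pc_row; under eq_bigr do rewrite mulrDr.
rewrite big_split /=; congr (_ + _); last by rewrite !big_ord_recr big_ord0 /=; ring.
under eq_bigr do rewrite big_distrr /=.
rewrite exchange_big /=; apply: eq_bigr => t _.
rewrite (horner_coef_wide t size_p) big_distrr /=.
by apply: eq_bigr => j _; ring.
Qed.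

Lemma code_wt_le4_Some u t0 : u \in code F -> (wt u <= 4)%N -> u (Some t0) = 0.
Proof.
rewrite inE => /forallP row0 wt4; apply/eqP/negPn/negP => ut0.
pose S := [set t | u (Some t) != 0] :\ t0.
pose p := \prod_(t in S) ('X - t%:P).
have size_p : size p = #|S|.+1 by rewrite /p -big_enum /= size_prod_XsubC cardE.
have wt_u : wt u = (#|S|.+1 + (u None != 0%R))%N.
  by rewrite wt_Some_None (cardsD1 t0) inE ut0.
have p_root t : t \in S -> p.[t] = 0.
  by move=> tS; apply/rootP; rewrite /p -big_enum /= root_prod_XsubC mem_enum.
have p_t0 : p.[t0] != 0.
  rewrite /p horner_prod; apply/prodf_neq0 => t tS.
  by rewrite !hornerE subr_eq0; apply: contraTneq tS => <-; rewrite !inE eqxx.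
have size_p4 : (size p <= 4)%N by rewrite size_p; lia.
have := pc_row_poly u size_p4.
rewrite big1 => [|j _]; last by rewrite (eqP (row0 j)) mulr0.
rewrite (bigD1 t0) //= big1 => [|t t_neq_t0]; last first.
  have [-> | ut] := eqVneq (u (Some t)) 0; first by rewrite mul0r.
  by rewrite p_root ?mulr0 // !inE t_neq_t0.
have -> : p`_3 * u None = 0.
  have [-> | uN] := eqVneq (u None) 0; first by rewrite mulr0.
  by rewrite nth_default ?mul0r // size_p; move: wt_u; rewrite uN /=; lia.
by move/esym/eqP; rewrite !addr0 mulf_eq0 (negbTE ut0) (negbTE p_t0).
Qed.

Lemma code_wt_le4_eq0 u : u \in code F -> (wt u <= 4)%N -> u = 0.
Proof.
move=> uc wt4; have uS t := code_wt_le4_Some t uc wt4.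
have uN : u None = 0.
  move: uc; rewrite inE => /forallP/(_ (inord 3))/eqP.
  by rewrite /pc_row inordK // big1 ?add0r ?mul1r // => t _; rewrite uS mul0r.
by apply/ffunP => -[t|]; rewrite ffunE ?uS.
Qed.

Lemma wt_le_length u : (wt u <= #|F|.+1)%N.
Proof. by rewrite /wt -card_option max_card. Qed.

Lemma supp_opp u : supp (- u) = supp u.
Proof. by apply/setP => i; rewrite !inE ffunE oppr_eq0. Qed.

Lemma supp_sub u v : supp (u - v) \subset supp u :|: supp v.
Proof.
apply/subsetP => i; rewrite !inE !ffunE; apply: contraR.
by rewrite negb_or !negbK => /andP [/eqP -> /eqP ->]; rewrite subrr.
Qed.

Lemma wt_sub u v : (wt (u - v)%R <= wt u + wt v)%N.
Proof. by rewrite /wt (leq_trans (subset_leq_card (supp_sub u v))) ?cardsU ?leq_subr. Qed.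

Lemma supported_sub T u v :
  u \in supported T -> v \in supported T -> u - v \in supported T.
Proof. by rewrite !inE => uT vT; rewrite (subset_trans (supp_sub u v)) // subUset uT. Qed.

Lemma card_supported T : #|supported T| = (#|F| ^ #|T|)%N.
Proof.
transitivity #|pffun_on (0 : F) T predT|; last by rewrite card_pffun_on.
apply: eq_card => u; rewrite inE.
have -> : (supp u \subset T) = (0.-support u \subset T).
  by apply: eq_subset => i; rewrite inE supportE.
by apply/idP/pffun_onP => [uT | [] //]; split=> // i _; rewrite inE.
Qed.

Lemma syndrome_inj_supported T :
  (#|T| <= 4)%N -> {in supported T &, injective syndrome}.
Proof.
move=> T4 x y xT yT sxy.
have xy_code : x - y \in code F by rewrite mem_code syndromeB sxy subrr.
have xy_wt : (wt (x - y)%R <= 4)%N.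
  by apply: leq_trans T4; apply: subset_leq_card; have := supported_sub xT yT; rewrite inE.
by apply/eqP; rewrite -subr_eq0; apply/eqP; apply: code_wt_le4_eq0.
Qed.

Lemma coset_meets_supported v T :
  (4 <= #|T|)%N -> exists2 x, x \in coset v & x \in supported T.
Proof.
move=> T4; have [T' T'T T'_4] : exists2 T' : {set option F}, T' \subset T & #|T'| = 4%N.
  have : (0 < #|[set T' : {set option F} | T' \subset T & #|T'| == 4%N]|)%N.
    by rewrite cards_draws bin_gt0.
  by case/card_gt0P => T'; rewrite inE => /andP [T'T /eqP T'_4]; exists T'.
have syndrome_onto : syndrome @: supported T' = setT.
  apply/eqP; rewrite eqEcard subsetT cardsT card_ffun card_ord.
  have inj : {in supported T' &, injective syndrome}.
    by apply: syndrome_inj_supported; rewrite T'_4.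
  by rewrite (card_in_imset inj) card_supported T'_4 leqnn.
have /imsetP [x xT' x_v] : syndrome v \in syndrome @: supported T' by rewrite syndrome_onto inE.
exists x; first by rewrite mem_coset x_v.
by move: xT'; rewrite !inE => /subset_trans; apply.
Qed.

(* Translating by a coset vector supported on [T] matches the coset with the code. *)
Lemma card_coset_supported v T : (4 <= #|T|)%N ->
  #|coset v :&: supported T| = #|code F :&: supported T|.
Proof.
move=> T4; have [x x_v xT] := coset_meets_supported v T4.
rewrite -[RHS](card_preimset _ (addIr (- x))); apply: eq_card => u.
rewrite [u \in _ @^-1: _]inE /= !in_setI mem_code syndromeB subr_eq0 mem_coset.
rewrite mem_coset in x_v; rewrite (eqP x_v); congr (_ && _).
apply/idP/idP => [uT | uxT]; first exact: supported_sub.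
have := supported_sub uxT (_ : - x \in supported T); rewrite opprK subrK; apply.
by move: xT; rewrite !inE supp_opp.
Qed.

Lemma sum_card_supported (V : {set vec F}) t : (t <= #|F|.+1)%N ->
  (\sum_(T : {set option F} | #|T| == t) #|V :&: supported T| =
   \sum_(k < #|F|.+2) B k V * 'C(#|F|.+1 - k, #|F|.+1 - t))%N.
Proof.
move=> t_le_n.
transitivity (\sum_(u in V) 'C(#|F|.+1 - wt u, #|F|.+1 - t))%N.
  rewrite (eq_bigr (fun T => \sum_(u in V :&: supported T) 1)%N) => [|T _]; last first.
    by rewrite sum1_card.
  rewrite (exchange_big_dep (mem V)) /= => [|T u _]; last by rewrite inE => /andP [].
  apply: eq_bigr => u uV; rewrite sum1dep_card -card_option -card_supsets ?card_option //.
  by apply: eq_card => T; rewrite !inE uV andbC.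
rewrite (partition_big (fun u => inord (wt u) : 'I_#|F|.+2) xpredT) //=.
apply: eq_bigr => k _; rewrite /B -sum1_card big_distrl /=.
apply: eq_big => [u | u /andP [_ /eqP <-]]; last by rewrite inordK ?ltnS ?wt_le_length ?mul1n.
by rewrite !inE -val_eqE /= inordK // ltnS wt_le_length.
Qed.

Lemma B_lt_wt (V : {set vec F}) W k :
  coset_has_weight V W -> (k < W)%N -> B k V = 0%N.
Proof.
move=> [_ V_min] kW; apply/eqP; rewrite cards_eq0; apply/eqP/setP => u; rewrite !inE.
by apply/negbTE/andP => -[uV /eqP wt_u]; have := V_min u uV; lia.
Qed.

Lemma B_wt2 v : coset_has_weight (coset v) 2 -> B 2 (coset v) = 1%N.
Proof.
move=> [[u0 u0v wt_u0] _]; apply/eqP/cards1P; exists u0; apply/setP => u.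
rewrite in_set in_set1; apply/andP/eqP => [[uv /eqP wt_u] | ->]; last by rewrite u0v wt_u0.
apply/eqP; rewrite -subr_eq0; apply/eqP/code_wt_le4_eq0.
  by move: uv u0v; rewrite mem_code syndromeB subr_eq0 !mem_coset => /eqP -> /eqP ->.
by have := wt_sub u u0; rewrite wt_u wt_u0.
Qed.

Lemma B_small_coset_eq W k va vb : (W == 2%N) || (W == 3%N) ->
  coset_has_weight (coset va) W -> coset_has_weight (coset vb) W -> (k < 3)%N ->
  B k (coset va) = B k (coset vb).
Proof.
move=> W23 ha hb k3.
have [kW | Wk] := ltnP k W; first by rewrite (B_lt_wt ha kW) (B_lt_wt hb kW).
have [W2 k2] : W = 2%N /\ k = 2%N by case/orP: W23 => /eqP; lia.
by subst W k; rewrite (B_wt2 ha) (B_wt2 hb).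
Qed.

Lemma Dq_coset_eq W w va vb : (W == 2%N) || (W == 3%N) ->
  coset_has_weight (coset va) W -> coset_has_weight (coset vb) W ->
  (3 <= w <= #|F|.+1)%N -> Dq w (coset va) = Dq w (coset vb).
Proof.
move=> W23 ha hb w_range.
pose e k : int := (B k (coset va))%:R - (B k (coset vb))%:R.
have e_lt3 k : (k < 3)%N -> e k = 0.
  by move=> k3; rewrite /e (B_small_coset_eq W23 ha hb k3) subrr.
have e_sys t : (3 < t <= #|F|.+1)%N ->
    \sum_(k < #|F|.+2) e k * 'C(#|F|.+1 - k, #|F|.+1 - t)%:R = 0.
  move=> /andP [t4 tn].
  have same_sums : (\sum_(k < #|F|.+2) B k (coset va) * 'C(#|F|.+1 - k, #|F|.+1 - t) =
                    \sum_(k < #|F|.+2) B k (coset vb) * 'C(#|F|.+1 - k, #|F|.+1 - t))%N.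
    rewrite -!sum_card_supported //; apply: eq_bigr => T /eqP T_t.
    by rewrite !card_coset_supported // T_t.
  rewrite /e; under eq_bigr do rewrite mulrBl -!natrM.
  by rewrite sumrB -!natr_sum same_sums subrr.
have := bin_solution_reflect (bin_system_solve e_lt3 e_sys) w_range.
rewrite (_ : #|F|.+1 + 3 - w = #|F| + 4 - w)%N; last by lia.
rewrite (_ : #|F|.+1 + 3 = #|F| + 2 * 2)%N; last by lia.
rewrite exprD exprM sqrrN expr1n mulr1 => e_reflect.
apply/eqP; rewrite /Dq -subr_eq0; apply/eqP.
transitivity (e (#|F| + 4 - w)%N - (-1) ^+ #|F| * e w); first by rewrite /e !natz; ring.
by rewrite e_reflect subrr.
Qed.

End ParityCheckCode.

(* The hypotheses on q only serve to classify the cosets of each weight: the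
   identity holds for any two cosets of weight 2, or of weight 3, and for
   every 3 <= w <= q + 1. *)
Theorem theorem5p2 (F : finFieldType) (xi : int) (w : nat) :
  (5 <= #|F|)%N ->
  xi \in [:: -1; 0; 1] ->
  (#|F|%:Z = xi %[mod 3])%Z ->
  (3 <= w <= (#|F| + 3)./2)%N ->
  (forall W : nat, (W, xi) \in [:: (2%N, 1); (3%N, 1); (3%N, 0)] ->
     forall va vb : vec F,
       coset_has_weight (coset va) W -> coset_has_weight (coset vb) W ->
       Dq w (coset va) = Dq w (coset vb))
  /\
  (xi = -1 ->
     forall va vb vc : vec F,
       coset_has_weight (coset va) 3 -> coset_has_weight (coset vb) 3 ->
       coset_has_weight (coset vc) 3 ->
       Dq w (coset va) = Dq w (coset vb) /\ Dq w (coset vb) = Dq w (coset vc)).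
Proof.
move=> _ _ _ /andP [w3 w_le].
have w_range : (3 <= w <= #|F|.+1)%N.
  by rewrite w3 (leq_trans w_le) // leq_half_double; lia.
split=> [W W_xi va vb ha hb | _ va vb vc ha hb hc].
  apply: (Dq_coset_eq _ ha hb w_range).
  by move: W_xi; rewrite !inE => /or3P [] /eqP [-> _].
by split; [exact: (Dq_coset_eq _ ha hb w_range) | exact: (Dq_coset_eq _ hb hc w_range)].
Qed.
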